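(* Let $P\subset\mathbb R_+^n$ be a nonempty $n$-dimensional polyhedron with $P+\mathbb R_+^n\subset P$, $\Sigma$ a simplicial subdivision of the fan $\Sigma_0$ associated with $P$, $\sigma\in\Sigma^{(n)}$ with skeleton $a^1(\sigma),\dots,a^n(\sigma)$, $I\subset\{1,\dots,n\}$, and $\gamma=\gamma(I,\sigma)$ (assumed nonempty). Then the following are equivalent: (i) $\gamma$ is compact; (ii) $\sum_{j\in I}a^j_k(\sigma)>0$ for every $k=1,\dots,n$; (iii) $V(\gamma)=\emptyset$; (iv) $\pi(\sigma)(T_I(\mathbb R^n))=\{0\}$; (v) $\pi(\sigma)(T_I^*(\mathbb R^n))=\{0\}$.
   Context: $H(a,l)=\{x:\langle a,x\rangle=l\}$, $H^+(a,l)=\{x:\langle a,x\rangle\ge l\}$; polyhedron: finite intersection of $H^+(a,l)$ with $(a,l)\in\mathbb Z^n\times\mathbb Z$; faces are $P\cap H(a,l)$ with $P\subset H^+(a,l)$. $l(a)=\min\{\langle a,\alpha\rangle:\alpha\in P\}$. For each face $\gamma$, $\gamma^*=\{a\in\mathbb R_+^n:H(a,l(a))\cap P=\gamma\}$; closures of the $\gamma^*$ form the fan $\Sigma_0$. A simplicial subdivision $\Sigma$: fan with support $\mathbb R_+^n$, each cone inside a cone of $\Sigma_0$, each cone's skeleton (primitive integer edge vectors) completable to a basis of $\mathbb Z^n$; $\Sigma^{(n)}$ its $n$-dimensional cones. $\gamma(I,\sigma)=\bigcap_{j\in I}H(a^j(\sigma),l(a^j(\sigma)))\cap P$, with $\gamma(\emptyset,\sigma)=P$.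 $V(\gamma)=\{k:\gamma+\mathbb R_+e_k\subset\gamma\}$ ($e_k$ standard basis vector). $\pi(\sigma)(y)=x$ with $x_k=\prod_jy_j^{a^j_k(\sigma)}$. $T_I(\mathbb R^n)=\{y:y_j=0\text{ for }j\in I\}$, $T_I^*(\mathbb R^n)=\{y:y_j=0\iff j\in I\}$. *)

From Stdlib Require Import Reals ZArith ClassicalEpsilon.
From mathcomp Require Import all_boot.
Set Implicit Arguments. Unset Strict Implicit. Unset Printing Implicit Defensive.

Open Scope R_scope.

Definition rvec (n : nat) := 'I_n -> R.
Definition zvec (n : nat) := 'I_n -> Z.
Definition rset (n : nat) := rvec n -> Prop.

Definition zr {n} (a : zvec n) : rvec n := fun k => IZR (a k).

Definition seteq {n} (S T : rset n) : Prop := forall x, S x <-> T x.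
Definition rsubset {n} (S T : rset n) : Prop := forall x, S x -> T x.

Definition dot {n} (a x : rvec n) : R := \big[Rplus/0]_(k < n) (a k * x k).

Definition Hyp {n} (a : rvec n) (l : R) : rset n := fun x => dot a x = l.
Definition Hplus {n} (a : rvec n) (l : R) : rset n := fun x => dot a x >= l.

Definition nonneg_orthant n : rset n := fun x => forall k, 0 <= x k.

Definition polyhedron {n} (cs : list (zvec n * Z)) : rset n :=
  fun x => forall c, List.In c cs -> Hplus (zr c.1) (IZR c.2) x.

Definition full_dim {n} (P : rset n) : Prop :=
  exists (x0 : rvec n) (xs : 'I_n -> rvec n),
    P x0 /\ (forall i, P (xs i)) /\
    (forall c : 'I_n -> R,
        (forall k, \big[Rplus/0]_(i < n) (c i * (xs i k - x0 k)) = 0) ->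
        forall i, c i = 0).

Definition orthant_stable {n} (P : rset n) : Prop :=
  forall x y, P x -> nonneg_orthant y -> P (fun k => x k + y k).

Definition face {n} (P : rset n) (g : rset n) : Prop :=
  exists (a : rvec n) (l : R),
    rsubset P (Hplus a l) /\ seteq g (fun x => P x /\ Hyp a l x).

Definition is_min_value {n} (P : rset n) (a : rvec n) (m : R) : Prop :=
  (exists al, P al /\ dot a al = m) /\ (forall al, P al -> m <= dot a al).

Definition lval {n} (P : rset n) (a : rvec n) : R :=
  epsilon (inhabits 0) (is_min_value P a).

Definition supp_face {n} (P : rset n) (a : rvec n) : rset n :=
  fun x => Hyp a (lval P a) x /\ P x.

Definition gstar {n} (P : rset n) (g : rset n) : rset n :=
  fun a => nonneg_orthant a /\ seteq (supp_face P a) g.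

Definition rclosure {n} (S : rset n) : rset n :=
  fun x => forall eps, 0 < eps -> exists y, S y /\ forall k, Rabs (x k - y k) < eps.

Definition cone_of_Sigma0 {n} (P : rset n) (C : rset n) : Prop :=
  exists g, face P g /\ seteq C (rclosure (gstar P g)).

(* cones are represented by their skeleton: a list of integer vectors *)
Definition zvec0 {n} : zvec n := fun _ => 0%Z.

Definition rcone {n} (s : list (zvec n)) : rset n :=
  fun x => exists c : nat -> R, (forall i, 0 <= c i) /\
    forall k, x k = \big[Rplus/0]_(i < size s) (c i * IZR (nth zvec0 s i k)).

Definition cone_face {n} (C : rset n) (F : rset n) : Prop :=
  exists a : rvec n, rsubset C (Hplus a 0) /\ seteq F (fun x => C x /\ Hyp a 0 x).

Definition is_fan {n} (Sig : list (list (zvec n))) : Prop :=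
  (forall s, List.In s Sig -> forall F, cone_face (rcone s) F ->
      exists s', List.In s' Sig /\ seteq (rcone s') F) /\
  (forall s s', List.In s Sig -> List.In s' Sig ->
      cone_face (rcone s) (fun x => rcone s x /\ rcone s' x) /\
      cone_face (rcone s') (fun x => rcone s x /\ rcone s' x)).

Definition primitive {n} (v : zvec n) : Prop :=
  (exists k, v k <> 0%Z) /\
  forall (m : Z) (w : zvec n), (forall k, v k = (m * w k)%Z) -> m = 1%Z \/ m = (-1)%Z.

Definition zcomb {n} (s : list (zvec n)) (c : nat -> Z) : zvec n :=
  fun k => \big[Z.add/0%Z]_(i < size s) (c i * nth zvec0 s i k)%Z.

Definition Zbasis {n} (s : list (zvec n)) : Prop :=
  (forall v : zvec n, exists c, forall k, v k = zcomb s c k) /\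
  (forall c, (forall k, zcomb s c k = 0%Z) -> forall i, (i < size s)%N -> c i = 0%Z).

Definition simplicial_subdivision {n} (P : rset n) (Sig : list (list (zvec n))) : Prop :=
  is_fan Sig /\
  (forall x, nonneg_orthant x <-> exists s, List.In s Sig /\ rcone s x) /\
  (forall s, List.In s Sig -> exists C, cone_of_Sigma0 P C /\ rsubset (rcone s) C) /\
  (forall s, List.In s Sig -> (forall v, List.In v s -> primitive v) /\
                              exists t, Zbasis (s ++ t)).

Definition skel {n} (s : list (zvec n)) (j : 'I_n) : zvec n := nth zvec0 s j.

Definition gammaI {n} (P : rset n) (s : list (zvec n)) (I : {set 'I_n}) : rset n :=
  fun x => (forall j, j \in I -> Hyp (zr (skel s j)) (lval P (zr (skel s j))) x) /\ P x.

Definition Vset {n} (g : rset n) (k : 'I_n) : Prop :=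
  forall x t, g x -> 0 <= t -> g (fun i => x i + (if i == k then t else 0)).

Definition pimap {n} (s : list (zvec n)) (y : rvec n) : rvec n :=
  fun k => \big[Rmult/1]_(j < n) powerRZ (y j) (skel s j k).

Definition TI {n} (I : {set 'I_n}) : rset n := fun y => forall j, j \in I -> y j = 0.
Definition TIstar {n} (I : {set 'I_n}) : rset n := fun y => forall j, y j = 0 <-> j \in I.

Definition rimage {n} (f : rvec n -> rvec n) (S : rset n) : rset n :=
  fun x => exists y, S y /\ f y = x.

Definition zero_set {n} : rset n := fun x => forall k, x k = 0.

Definition is_open {n} (U : rset n) : Prop :=
  forall x, U x -> exists eps, 0 < eps /\
    forall y, (forall k, Rabs (y k - x k) < eps) -> U y.

Definition rcompact {n} (S : rset n) : Prop :=
  forall (Idx : Type) (U : Idx -> rset n),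
    (forall i, is_open (U i)) -> (forall x, S x -> exists i, U i x) ->
    exists l : list Idx, forall x, S x -> exists i, List.In i l /\ U i x.

(* Everything is reduced to one combinatorial condition on the skeleton: no
   column k of the I-rows of the skeleton vanishes ("no zero column").  Since
   the skeleton vectors lie in R_+^n, they are nonnegative integer vectors, and:
   - the column sums are positive iff no column is zero;
   - a zero column k lets gamma contain the ray x + R_+ e_k (P + R_+^n is in P),
     so k is in V(gamma) and gamma is unbounded, hence not compact; conversely a
     positive entry a^j_k >= 1 bounds x_k by l(a^j) on gamma, and gamma is closed
     (an intersection of closed half-spaces and hyperplanes), so Heine-Borel,
     taken from mathcomp-analysis, makes it compact;
   - a positive entry a^j_k makes the k-th monomial of pi(sigma) vanish on T_I,
     while a zero column makes it equal to 1 at the point that is 0 on I and 1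
     elsewhere, a point of T_I^* (hence of T_I). *)
From Pilot Require Import Defs.
From Stdlib Require Import Reals ZArith Lra Lia Classical FunctionalExtensionality.
From mathcomp Require Import all_boot.
From HB Require Import structures.
Set Implicit Arguments.
Open Scope R_scope.

Definition rclosed {n} (S : rset n) : Prop := is_open (fun x => ~ S x).

(* Heine-Borel for the sup-norm topology of [Defs], via Tychonoff's theorem. *)
Module HeineBorel.
From mathcomp Require Import all_order all_algebra all_classical all_reals all_analysis Rstruct Rstruct_topology.
Import Order.TTheory GRing.Theory Num.Theory.
Import ArrowAsProduct.
Local Open Scope classical_set_scope.
(* R^n is a pointed space, as the product-topology lemmas require. *)
HB.instance Definition _ (n : nat) := isPointed.Build ('I_n -> R) (fun _ => 0%R).

Lemma is_open_open n (U : rset n) : is_open U -> open (U : set ('I_n -> R)).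
Proof.
move=> oU; rewrite openE => x Ux; have [eps [eps0 H]] := oU x Ux.
have near_x : \forall y \near x, forall k : 'I_n, Rabs (y k - x k) < eps.
  apply: (@filter_forall _ _ (fun k (y : 'I_n -> R) => Rabs (y k - x k) < eps)
                         (nbhs x)) => k.
  have hb : nbhs (x k) (ball (x k) eps) by apply: nbhsx_ballx; exact/RltP.
  have := @proj_continuous 'I_n (fun _ => R) k x _ hb.
  apply: (@filterS _ _ _ (proj k @^-1` ball (x k) eps)) => // y.
  rewrite /ball /= /proj RabsE RminusE => h.
  by apply/RltP; rewrite distrC.
exact: (@filterS _ (nbhs x) _ _ U H near_x).
Qed.

Lemma In_of_mem (T : eqType) (x : T) (s : seq T) : x \in s -> List.In x s.
Proof. elim: s => //= a s IH; rewrite in_cons => /orP [/eqP ->|/IH]; tauto. Qed.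

Lemma list_of_indices (T Idx : Type) (U : Idx -> T) (l : list T) :
  (forall S, List.In S l -> exists i, U i = S) ->
  exists li : list Idx, forall S, List.In S l -> exists i, List.In i li /\ U i = S.
Proof.
elim: l => [|a l IH] H; first by exists nil.
have [|li Hli] := IH; first by move=> S HS; apply: H; right.
have [i Hi] := H a (or_introl erefl).
exists (i :: li) => S [<-|HS]; first by exists i; split => //; left.
by have [j [Hj1 Hj2]] := Hli S HS; exists j; split => //; right.
Qed.

Lemma heine_borel n (K : rset n) (lo hi : 'I_n -> R) :
  (forall x, K x -> forall k, lo k <= x k <= hi k) -> rclosed K -> rcompact K.
Proof.
move=> K_box K_closed.
have cK : compact (K : set ('I_n -> R)).
  apply: (@subclosed_compact _ _ _ _
            (@tychonoff 'I_n (fun _ => R) (fun k => `[lo k, hi k]) _)).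
  - have := open_closedC (@is_open_open n _ K_closed).
    by rewrite -[X in closed X]/(~` ~` (K : set ('I_n -> R))) setCK.
  - by move=> k; apply: segment_compact.
  - move=> x Kx k /=; have [h1 h2] := K_box x Kx k.
    by rewrite in_itv /=; apply/andP; split; apply/RleP.
have {}cK : cover_compact (K : set ('I_n -> R)) by rewrite -(@compact_cover ('I_n -> R)).
move=> Idx U U_open K_cov.
have opens : forall S : set ('I_n -> R), [set S | exists i, U i = S] S -> open (id S).
  by move=> S [i <-]; apply: is_open_open.
have covers : (K : set ('I_n -> R)) `<=` cover [set S | exists i, U i = S] id.
  by move=> x /K_cov [i Hi]; exists (U i) => //; exists i.
have [D' sD Dcov] := cK (set ('I_n -> R)) [set S | exists i, U i = S] id opens covers.
have [|li Hli] := @list_of_indices _ Idx U (finmap.enum_fset D'); last first.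
  exists li => x Kx; have [S HS Sx] := Dcov x Kx.
  have [i [Hi1 Hi2]] := Hli S (@In_of_mem _ _ _ HS).
  by exists i; split => //; rewrite Hi2.
move=> S HS.
have HS' : (S : set ('I_n -> R)) \in finmap.enum_fset D'.
  move: HS; elim: (finmap.enum_fset D') => //= a l IH [->|/IH].
    by rewrite in_cons eqxx.
  by rewrite in_cons => ->; rewrite orbT.
by have := sD S HS'; rewrite inE.
Qed.
End HeineBorel.

Lemma Rplus_A : associative Rplus. Proof. by move=> *; rewrite Rplus_assoc. Qed.
Lemma Rplus_0L : left_id 0 Rplus. Proof. exact: Rplus_0_l. Qed.
HB.instance Definition _ := Monoid.isComLaw.Build R 0 Rplus Rplus_A Rplus_comm Rplus_0L.
Lemma Rmult_A : associative Rmult. Proof. by move=> *; rewrite Rmult_assoc. Qed.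
Lemma Rmult_1L : left_id 1 Rmult. Proof. exact: Rmult_1_l. Qed.
HB.instance Definition _ := Monoid.isComLaw.Build R 1 Rmult Rmult_A Rmult_comm Rmult_1L.
Lemma Zadd_A : associative Z.add. Proof. by move=> *; rewrite Z.add_assoc. Qed.
HB.instance Definition _ := Monoid.isComLaw.Build Z 0%Z Z.add Zadd_A Z.add_comm Z.add_0_l.

Section LinearForms.
Variable n : nat.

Lemma Rsum_nonneg (F : 'I_n -> R) (Q : pred 'I_n) :
  (forall i, 0 <= F i) -> 0 <= \big[Rplus/0]_(i | Q i) F i.
Proof. by move=> H; apply: (big_ind (fun x => 0 <= x)) => //; [lra | move=> *; lra]. Qed.

Lemma Rsum_ge_term (F : 'I_n -> R) k :
  (forall i, 0 <= F i) -> F k <= \big[Rplus/0]_(i < n) F i.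
Proof.
move=> H; rewrite (bigD1 k) //=.
match goal with |- _ <= _ + ?rest => have : 0 <= rest by apply: Rsum_nonneg end.
lra.
Qed.

Lemma dot_shift (a x : rvec n) k t :
  dot a (fun i => x i + (if i == k then t else 0)) = dot a x + a k * t.
Proof.
rewrite /dot (bigD1 k) //= [in RHS](bigD1 k) //= eqxx.
rewrite (eq_bigr (fun i => a i * x i)); last first.
  by move=> i /negbTE ->; rewrite Rplus_0_r.
lra.
Qed.

Lemma dot_continuous (a x : rvec n) d : 0 < d -> exists eps, 0 < eps /\
  forall y : rvec n, (forall k, Rabs (y k - x k) < eps) -> Rabs (dot a y - dot a x) < d.
Proof.
move=> d0; set S := \big[Rplus/0]_(k < n) Rabs (a k).
have S0 : 0 <= S by apply: Rsum_nonneg => i; apply: Rabs_pos.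
have e0 : 0 < d / (S + 1) by apply: Rdiv_lt_0_compat; lra.
exists (d / (S + 1)); split => // y Hy.
have bound : Rabs (dot a y - dot a x) <= S * (d / (S + 1)).
  apply: (big_ind3 (fun u v w => Rabs (u - v) <= w * (d / (S + 1)))).
  - rewrite Rminus_0_r Rabs_R0; lra.
  - move=> x1 x2 x3 y1 y2 y3 h1 h2.
    have -> : x1 + y1 - (x2 + y2) = (x1 - x2) + (y1 - y2) by ring.
    have := Rabs_triang (x1 - x2) (y1 - y2); lra.
  - move=> i _; have -> : a i * y i - a i * x i = a i * (y i - x i) by ring.
    rewrite Rabs_mult; apply: Rmult_le_compat_l; first exact: Rabs_pos.
    exact: Rlt_le (Hy i).
have -> : d = S * (d / (S + 1)) + d / (S + 1) by field; lra.
lra.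
Qed.

Lemma coord_le_dot {a : zvec n} {x : rvec n} {k : 'I_n} :
  (forall i, 0 <= a i)%Z -> (a k > 0)%Z -> nonneg_orthant x -> x k <= dot (zr a) x.
Proof.
move=> a_ge0 ak_pos x_ge0.
have ak1 : 1 <= zr a k by apply: IZR_le; lia.
have terms_ge0 : forall i, 0 <= zr a i * x i.
  by move=> i; apply: Rmult_le_pos; [apply: IZR_le | ].
have := @Rsum_ge_term (fun i => zr a i * x i) k terms_ge0.
have := x_ge0 k; rewrite /dot; nra.
Qed.

End LinearForms.

Section ClosedSets.
Variable n : nat.

Lemma rclosed_forall (T : Type) (S : T -> rset n) :
  (forall t, rclosed (S t)) -> rclosed (fun x => forall t, S t x).
Proof.
move=> S_closed x /not_all_ex_not [t Ht].
have [e [e0 He]] := S_closed t x Ht.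
by exists e; split => // y /He Hy Hall; apply: Hy.
Qed.

Lemma rclosed_impl (Q : Prop) (S : rset n) : rclosed S -> rclosed (fun x => Q -> S x).
Proof.
move=> S_closed x not_impl; have [q Hx] := imply_to_and _ _ not_impl.
have [e [e0 He]] := S_closed x Hx.
by exists e; split => // y /He Hy Hq; apply/Hy/Hq.
Qed.

Lemma rclosed_and (S T : rset n) : rclosed S -> rclosed T -> rclosed (fun x => S x /\ T x).
Proof.
move=> S_closed T_closed x not_both; case: (not_and_or _ _ not_both) => Hx.
- by have [e [e0 He]] := S_closed x Hx; exists e; split => // y /He ? [].
- by have [e [e0 He]] := T_closed x Hx; exists e; split => // y /He ? [].
Qed.

Lemma rclosed_Hplus (a : rvec n) l : rclosed (Hplus a l).
Proof.
move=> x /Rnot_ge_lt lt_x; have [e [e0 He]] := @dot_continuous n a x (l - dot a x) ltac:(lra).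
exists e; split => // y /He /Rabs_def2; rewrite /Hplus; lra.
Qed.

Lemma rclosed_Hyp (a : rvec n) l : rclosed (Hyp a l).
Proof.
move=> x ne_x.
have d0 : 0 < Rabs (dot a x - l) by apply: Rabs_pos_lt; rewrite /Hyp in ne_x; lra.
have [e [e0 He]] := @dot_continuous n a x _ d0.
by exists e; split => // y /He; rewrite /Hyp => + Hy; rewrite Hy Rabs_minus_sym; lra.
Qed.

Lemma polyhedron_closed (cs : list (zvec n * Z)) : rclosed (polyhedron cs).
Proof. by apply: rclosed_forall => c; apply/rclosed_impl/rclosed_Hplus. Qed.

Lemma rcompact_coord_bounded (K : rset n) k :
  rcompact K -> exists M, forall x, K x -> x k < M.
Proof.
move=> K_compact.
have opens : forall m, is_open (fun y : rvec n => y k < INR m).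
  move=> m y Hy; exists (INR m - y k); split; first lra.
  by move=> z /(_ k) /Rabs_def2; lra.
have covers : forall y, K y -> exists m, y k < INR m.
  by move=> y _; have [m Hm] := INR_archimed 1 (y k) Rlt_0_1; exists m; lra.
have [l Hl] := K_compact nat _ opens covers.
exists (INR (List.list_sum l)) => x /Hl [m [m_in Hm]].
suff : (m <= List.list_sum l)%coq_nat by move/le_INR; lra.
by elim: {Hl} l m_in => //= a l IH [->|/IH]; lia.
Qed.

End ClosedSets.

(* The skeleton vectors lie in the support R_+^n of the fan, hence are nonnegative. *)
Lemma skeleton_nonneg n (P : rset n) (Sig : list (list (zvec n))) (s : list (zvec n)) :
  simplicial_subdivision P Sig -> List.In s Sig -> size s = n ->
  forall j k, (0 <= skel s j k)%Z.
Proof.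
move=> [_ [support _]] s_in size_s j k.
suff : nonneg_orthant (zr (skel s j)) by move=> /(_ k); apply: le_IZR.
apply/support; exists s; split => //.
exists (fun i => if i == nat_of_ord j then 1 else 0); split.
  by move=> i; case: (_ == _); lra.
move=> k'; rewrite size_s (bigD1 j) //= eqxx Rmult_1_l big1 ?Rplus_0_r //.
by move=> i /negbTE; rewrite -val_eqE /= => ->; rewrite Rmult_0_l.
Qed.

Section Skeleton.
Variables (n : nat) (s : list (zvec n)) (I : {set 'I_n}).
Hypothesis s_nonneg : forall j k, (0 <= skel s j k)%Z.

Definition zero_column (k : 'I_n) : Prop := forall j, j \in I -> skel s j k = 0%Z.

Lemma positive_entry k : ~ zero_column k -> exists j, j \in I /\ (skel s j k > 0)%Z.
Proof.
move=> nonzero; have [j not_zero] := not_all_ex_not _ _ nonzero.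
have [jI nz] := imply_to_and _ _ not_zero.
by exists j; split => //; have := s_nonneg j k; lia.
Qed.

Lemma column_sum_pos k :
  (\big[Z.add/0%Z]_(j < n | j \in I) skel s j k > 0)%Z <-> ~ zero_column k.
Proof.
split.
  by move=> sum_pos zero; move: sum_pos; rewrite big1 //; lia.
move=> /positive_entry [j [jI pos]]; rewrite (bigD1 j) //=.
match goal with |- (_ + ?rest > 0)%Z =>
  have : (0 <= rest)%Z by apply: (big_ind (fun x => 0 <= x)%Z) => //; lia end.
lia.
Qed.

Lemma pimap_vanishes y k j :
  y j = 0 -> (skel s j k > 0)%Z -> pimap s y k = 0.
Proof.
move=> yj0 pos; rewrite /pimap (bigD1 j) //= yj0.
case: (skel s j k) pos => [|p|p] pos; try lia.
by rewrite /= pow_i ?Rmult_0_l //; apply: Pos2Nat.is_pos.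
Qed.

Definition indicator_off_I : rvec n := fun j => if j \in I then 0 else 1.

Lemma indicator_off_I_TIstar : TIstar I indicator_off_I.
Proof.
move=> j; rewrite /indicator_off_I; case: ifP => jI; split => //.
by move/R1_neq_R0.
Qed.

Lemma pimap_indicator k : zero_column k -> pimap s indicator_off_I k = 1.
Proof.
move=> zero; rewrite /pimap big1 // => j _; rewrite /indicator_off_I.
by case: ifP => jI; [rewrite zero | apply: powerRZ_R1].
Qed.

(* Conditions (iv) and (v): pi(sigma) vanishes on any T between the indicator
   point and T_I iff no column is zero. *)
Lemma image_zero_iff (T : rset n) :
  T indicator_off_I -> rsubset T (TI I) ->
  seteq (rimage (pimap s) T) zero_set <-> forall k, ~ zero_column k.
Proof.
move=> T_ind T_TI.
have vanish : (forall k, ~ zero_column k) -> forall y, T y -> pimap s y = fun _ => 0.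
  move=> nz y Ty; apply: functional_extensionality => k.
  have [j [jI pos]] := positive_entry (nz k).
  exact: pimap_vanishes (T_TI y Ty j jI) pos.
split.
  move=> image_zero k zero.
  have := (image_zero _).1 (ex_intro _ _ (conj T_ind erefl)) k.
  by rewrite pimap_indicator //; apply: R1_neq_R0.
move=> nz x; split; first by move=> [y [Ty <-]] k; rewrite vanish.
move=> x0; exists indicator_off_I; split => //.
by rewrite vanish //; apply: functional_extensionality => k; rewrite x0.
Qed.

End Skeleton.

Section Face.
Variables (n : nat) (P : rset n) (s : list (zvec n)) (I : {set 'I_n}).
Hypothesis s_nonneg : forall j k, (0 <= skel s j k)%Z.
Hypothesis P_nonneg : rsubset P (@nonneg_orthant n).
Hypothesis P_stable : orthant_stable P.
Hypothesis P_closed : rclosed P.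
Hypothesis face_nonempty : exists x, gammaI P s I x.

Let g := gammaI P s I.

Lemma Vset_of_zero_column k : zero_column s I k -> Vset g k.
Proof.
move=> zero x t [on_H Px] t0; split.
  move=> j jI; rewrite /Hyp dot_shift /zr zero // Rmult_0_l Rplus_0_r.
  exact: on_H.
by apply: P_stable => // i; case: (_ == _); lra.
Qed.

Lemma not_Vset_of_positive_entry k j :
  j \in I -> (skel s j k > 0)%Z -> ~ Vset g k.
Proof.
move=> jI pos HV; have [x gx] := face_nonempty.
have := (HV x 1 gx Rle_0_1).1 j jI; rewrite /Hyp dot_shift (gx.1 j jI).
have := IZR_lt 0 _ (Z.gt_lt _ _ pos); rewrite /zr; lra.
Qed.

Lemma Vset_iff : (forall k, ~ Vset g k) <-> forall k, ~ zero_column s I k.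
Proof.
split; first by move=> noV k /Vset_of_zero_column /noV.
move=> nz k; have [j [jI pos]] := positive_entry s_nonneg (nz k).
exact: not_Vset_of_positive_entry jI pos.
Qed.

Lemma face_closed : rclosed g.
Proof.
apply: rclosed_and P_closed.
by apply: rclosed_forall => j; apply/rclosed_impl/rclosed_Hyp.
Qed.

(* Without zero columns, x_k <= l(a^j) on gamma for a^j_k > 0. *)
Lemma face_bounded : (forall k, ~ zero_column s I k) ->
  forall x, g x -> forall k,
    0 <= x k <= \big[Rplus/0]_(j < n) Rabs (lval P (zr (skel s j))).
Proof.
move=> nz x [on_H Px] k; have x_ge0 := P_nonneg Px.
have [j [jI pos]] := positive_entry s_nonneg (nz k).
have := coord_le_dot (s_nonneg j) pos x_ge0; rewrite (on_H j jI) => le_l.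
have := @Rsum_ge_term n (fun j => Rabs (lval P (zr (skel s j)))) j (fun _ => Rabs_pos _).
have := Rle_abs (lval P (zr (skel s j))); have := x_ge0 k; lra.
Qed.

(* Condition (i): a zero column gives an unbounded ray in gamma. *)
Lemma compact_iff : rcompact g <-> forall k, ~ zero_column s I k.
Proof.
split; last first.
  by move=> nz; apply: HeineBorel.heine_borel (face_bounded nz) face_closed.
move=> g_compact k zero; have [M HM] := rcompact_coord_bounded k g_compact.
have [x gx] := face_nonempty.
have ray := (Vset_of_zero_column zero : Vset g k) x _ gx (Rabs_pos (M - x k)).
have := HM _ ray; rewrite eqxx; have := Rle_abs (M - x k); lra.
Qed.

End Face.

Theorem proposition8p6 (n : nat) (cs : list (zvec n * Z))
  (Sig : list (list (zvec n))) (s : list (zvec n)) (I : {set 'I_n}) :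
  let P := polyhedron cs in
  (exists x, P x) ->
  full_dim P ->
  rsubset P (@nonneg_orthant n) ->
  orthant_stable P ->
  simplicial_subdivision P Sig ->
  List.In s Sig -> size s = n ->
  (exists x, gammaI P s I x) ->
  let g := gammaI P s I in
  (rcompact g <->
     (forall k : 'I_n, (\big[Z.add/0%Z]_(j < n | j \in I) skel s j k > 0)%Z)) /\
  (rcompact g <-> (forall k : 'I_n, ~ Vset g k)) /\
  (rcompact g <-> seteq (rimage (pimap s) (TI I)) zero_set) /\
  (rcompact g <-> seteq (rimage (pimap s) (TIstar I)) zero_set).
Proof.
move=> P _ _ P_nonneg P_stable subdiv s_in size_s face_nonempty g.
have s_nonneg := skeleton_nonneg s subdiv s_in size_s.
have compact := compact_iff s_nonneg P_nonneg P_stable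
                  (polyhedron_closed (cs := cs)) face_nonempty.
have sums : (forall k, (\big[Z.add/0%Z]_(j < n | j \in I) skel s j k > 0)%Z)
            <-> forall k, ~ zero_column s I k.
  by split=> H k; apply/(column_sum_pos s I s_nonneg k)/H.
have on_TI := image_zero_iff s s_nonneg (T := TI I)
  (fun j jI => (indicator_off_I_TIstar I j).2 jI) (fun y Ty => Ty).
have on_TIstar := image_zero_iff s s_nonneg (T := TIstar I)
  (indicator_off_I_TIstar I) (fun y Ty j jI => (Ty j).2 jI).
have no_ray := Vset_iff s_nonneg P_stable face_nonempty.
split; first exact: iff_trans compact (iff_sym sums).
split; first exact: iff_trans compact (iff_sym no_ray).
split; first exact: iff_trans compact (iff_sym on_TI).
exact: iff_trans compact (iff_sym on_TIstar).
Qed.
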